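(* Let $G$ be a map graph with a corresponding planar bipartite graph $B$, let $\mathcal{D}=(T,\beta_{\mathcal{D}})$ be a nice tree decomposition of $B$, and let $\mathcal{D}'$ be derived from $\mathcal{D}$ as described in the context. Let $s\in S(G)$ and let $t$ be a node of $T$ labelled introduce$(s)$ in $\mathcal{D}$, with unique child $t'$. Then $\mathsf{Original}(t)=\mathsf{Original}(t')$ and $\mathsf{Fake}(t)=\mathsf{Fake}(t')$.
   Context: All graphs are finite and simple. For a bipartite graph $B$ with bipartition $V(B)=W\uplus U$, the half-square of $B$ is the graph on $W$ in which two vertices are adjacent iff they are at distance exactly $2$ in $B$. A graph $G$ is a map graph iff it is the half-square of some planar bipartite graph $B$; such $B$ (with $W=V(G)$) is a corresponding planar bipartite graph, and $S(G)=U$ is the set of special vertices. A tree decomposition $(T,\beta)$: rooted tree $T$, bags covering all vertices and edges, and for each vertex the nodes containing it induce a connected subtree. $\gamma_{\mathcal{D}}(t)$ is the union of bags of $t$ and its descendants. A nice tree decomposition has empty root bag and each node is a leaf (empty bag), introduce$(w)$ (one child $u$, $\beta(t)=\beta(u)\cup\{w\}$, $w\notin\beta(u)$), forget$(w)$ (one child $u$, $\beta(t)=\beta(u)\setminus\{w\}$, $w\in \beta(u)$), or join (two children with identical bags equal to $\beta(t)$). The derived decomposition $\mathcal{D}'=(T,\beta_{\mathcal{D}'})$ has $\beta_{\mathcal{D}'}(t)=(\beta_{\mathcal{D}}(t)\cap V(G))\cup\bigcup_{s\in\beta_{\mathcal{D}}(t)\cap S(G)}(N_B(s)\cap\gamma_{\mathcal{D}}(t))$.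 Define $\mathsf{Original}(t)=\beta_{\mathcal{D}}(t)\cap\beta_{\mathcal{D}'}(t)$ and $\mathsf{Fake}(t)=\beta_{\mathcal{D}'}(t)\setminus\beta_{\mathcal{D}}(t)$. *)

From mathcomp Require Import all_boot.
From mathcomp Require Import perm.
Set Implicit Arguments. Unset Strict Implicit. Unset Printing Implicit Defensive.

Definition simple_graph (V : finType) (e : rel V) : Prop :=
  symmetric e /\ irreflexive e.

Definition bipartition (V : finType) (e : rel V) (W U : {set V}) : Prop :=
  [/\ W :&: U = set0, W :|: U = setT &
      forall x y, e x y -> (x \in W) && (y \in U) || (x \in U) && (y \in W)].

Definition dart (V : finType) (e : rel V) := {x : V * V | e x.1 x.2}.

(* reversal of a dart (correct when e is symmetric) *)
Definition drev (V : finType) (e : rel V) (d : dart e) : dart e :=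
  insubd d ((val d).2, (val d).1).

Definition rotation_system (V : finType) (e : rel V) (sigma : {perm dart e}) :=
  (forall d, (val (sigma d)).1 = (val d).1) /\
  (forall d d', (val d).1 = (val d').1 -> fconnect sigma d d').

(* number of faces of the embedding given by sigma: orbits of sigma o rev *)
Definition nfaces (V : finType) (e : rel V) (sigma : {perm dart e}) : nat :=
  fcard (fun d => sigma (drev d)) predT.

Definition nisolated (V : finType) (e : rel V) : nat :=
  #|[set v | [forall w, ~~ e v w]]|.

(* A finite simple graph is planar iff it has a rotation system of genus 0,
   i.e. Euler's formula V - E + F = 2 holds on every component with an edge.
   Summed over components (isolated vertices contribute 1 vertex, 0 faces):
   |V| + F + #isolated = |E| + 2 #components, with |E| = #darts / 2. *)
Definition planar (V : finType) (e : rel V) : Prop :=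
  exists sigma : {perm dart e}, rotation_system sigma /\
    2 * #|V| + 2 * nfaces sigma + 2 * nisolated e = #|{: dart e}| + 4 * n_comp e predT.

Definition dist2 (V : finType) (e : rel V) (x y : V) : bool :=
  [&& x != y, ~~ e x y & [exists u, e x u && e u y]].

Definition half_square (V : finType) (e : rel V) (W : {set V}) (g : rel V) : Prop :=
  forall x y, g x y = [&& x \in W, y \in W & dist2 e x y].

Definition rooted_tree (N : finType) (par : N -> option N) (r : N) : Prop :=
  par r = None /\ forall t, exists k, iter k (obind par) (Some t) = Some r.

Definition tadj (N : finType) (par : N -> option N) : rel N :=
  fun a b => (par a == Some b) || (par b == Some a).

Definition children (N : finType) (par : N -> option N) (t : N) : {set N} :=
  [set c | par c == Some t].

Definition desc (N : finType) (par : N -> option N) (s t : N) : bool :=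
  connect (fun a b => par a == Some b) s t.

Definition tree_connected (N : finType) (par : N -> option N) (X : {set N}) : Prop :=
  forall a b, a \in X -> b \in X ->
    connect (fun x y => [&& tadj par x y, x \in X & y \in X]) a b.

Definition tree_decomposition (V N : finType) (e : rel V)
    (par : N -> option N) (r : N) (beta : N -> {set V}) : Prop :=
  [/\ rooted_tree par r,
      forall v, exists t, v \in beta t,
      forall x y, e x y -> exists t, (x \in beta t) && (y \in beta t) &
      forall v, tree_connected par [set t | v \in beta t]].

Definition is_leaf (V N : finType) (par : N -> option N) (beta : N -> {set V}) t :=
  children par t = set0 /\ beta t = set0.
Definition is_introduce (V N : finType) (par : N -> option N) (beta : N -> {set V})
    t (w : V) (u : N) :=
  [/\ children par t = [set u], beta t = w |: beta u & w \notin beta u].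
Definition is_forget (V N : finType) (par : N -> option N) (beta : N -> {set V})
    t (w : V) (u : N) :=
  [/\ children par t = [set u], beta t = beta u :\ w & w \in beta u].
Definition is_join (V N : finType) (par : N -> option N) (beta : N -> {set V}) t :=
  exists u1 u2, [/\ u1 != u2, children par t = [set u1; u2],
                   beta u1 = beta t & beta u2 = beta t].

Definition nice_tree_decomposition (V N : finType) (e : rel V)
    (par : N -> option N) (r : N) (beta : N -> {set V}) : Prop :=
  [/\ tree_decomposition e par r beta, beta r = set0 &
      forall t, [\/ is_leaf par beta t,
                    exists w u, is_introduce par beta t w u,
                    exists w u, is_forget par beta t w u |
                    is_join par beta t]].

Definition gamma (V N : finType) (par : N -> option N) (beta : N -> {set V}) t : {set V} :=
  \bigcup_(s | desc par s t) beta s.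

Definition nbhd (V : finType) (e : rel V) (s : V) : {set V} := [set w | e s w].

(* the derived decomposition D' (W = V(G), U = S(G)) *)
Definition derived_bag (V N : finType) (e : rel V) (W U : {set V})
    (par : N -> option N) (beta : N -> {set V}) t : {set V} :=
  (beta t :&: W) :|:
  \bigcup_(s in beta t :&: U) (nbhd e s :&: gamma par beta t).

Definition Original (V N : finType) (e : rel V) (W U : {set V})
    (par : N -> option N) (beta : N -> {set V}) t : {set V} :=
  beta t :&: derived_bag e W U par beta t.

Definition Fake (V N : finType) (e : rel V) (W U : {set V})
    (par : N -> option N) (beta : N -> {set V}) t : {set V} :=
  derived_bag e W U par beta t :\: beta t.

(* Since t' is the only child of t, gamma(t) = {s} u gamma(t').  A neighbour w
   of s in gamma(t') already lies in beta(t'): otherwise the connected set of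
   bags containing w, and then the one containing s, would lead from the
   subtree of t' up to its parent t while avoiding t', which a rooted tree
   forbids.  As neighbours of special vertices lie in W and s does not, the
   derived bags of t and t' coincide and never contain s, so adding s to the
   bag changes neither Original nor Fake. *)

From mathcomp Require Import all_boot.

Set Implicit Arguments.
Unset Strict Implicit.
Unset Printing Implicit Defensive.

Section RootedTree.

Variables (N : finType) (par : N -> option N).

Lemma desc_iter x y : desc par x y -> exists k, iter k (obind par) (Some x) = Some y.
Proof.
move=> /connectP [p pth ->]; exists (size p).
elim: p x pth => [|z p IH] x // /andP [/eqP par_x pth].
by rewrite [size _]/= iterSr /= par_x; apply: IH.
Qed.

Lemma desc_parent a b c : desc par a b -> a != b -> par a = Some c -> desc par c b.
Proof.
move=> /connectP [[|z p] /= pth ->]; first by rewrite eqxx.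
move=> _ par_a; move: pth; rewrite par_a => /andP [/eqP [->] pth].
by apply/connectP; exists p.
Qed.

Lemma desc_childE s t :
  desc par s t = (s == t) || [exists c in children par t, desc par s c].
Proof.
apply/idP/idP.
- move=> /connectP [p]; case/lastP: p => [_ ->|p c]; first by rewrite eqxx.
  rewrite rcons_path last_rcons => /andP [pth par_c] ->.
  apply/orP; right; apply/existsP; exists (last s p).
  by rewrite inE par_c; apply/connectP; exists p.
- case/orP => [/eqP -> | /existsP [c /andP [par_c s_c]]]; first exact: connect0.
  by apply: connect_trans s_c (connect1 _); rewrite inE in par_c.
Qed.

(* Going up from t through t' and back to t would cycle forever, but going up
   from t eventually reaches the root and then [None]. *)
Lemma parent_not_desc r t t' : rooted_tree par r -> par t' = Some t -> ~~ desc par t t'.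
Proof.
move=> [par_r to_root] par_t'; apply/negP => /desc_iter [k t_t'].
have cycle_t : iter k.+1 (obind par) (Some t) = Some t by rewrite iterS t_t' /= par_t'.
have [K t_r] := to_root t.
have t_none : iter K.+1 (obind par) (Some t) = None by rewrite iterS t_r /= par_r.
have : iter (K.+1 * k + K.+1) (obind par) (Some t) = Some t.
  by rewrite -mulnSr iterM iter_fix.
by rewrite iterD t_none iter_fix.
Qed.

Lemma tree_connected_desc (X : {set N}) a b t' :
  tree_connected par X -> t' \notin X -> a \in X -> b \in X ->
  desc par a t' -> desc par b t'.
Proof.
move=> connX t'X aX bX; have /connectP [p pth ->] := connX a b aX bX.
elim: p a aX pth => [|z p IH] a aX //= /andP [/and3P [adj _ zX] pth] a_t'.
apply: IH zX pth _; case/orP: adj => /eqP par_eq.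
- by apply: desc_parent a_t' _ par_eq; apply: contraNneq t'X => <-.
- by apply: connect_trans _ a_t'; apply: connect1; rewrite /= par_eq.
Qed.

End RootedTree.

Section Decomposition.

Variables (V N : finType) (e : rel V) (par : N -> option N) (beta : N -> {set V}).

Lemma bag_sub_gamma t : beta t \subset gamma par beta t.
Proof. by apply: bigcup_sup; apply: connect0. Qed.

Lemma gammaE t :
  gamma par beta t = beta t :|: \bigcup_(c in children par t) gamma par beta c.
Proof.
apply/setP => w; apply/bigcupP/setUP.
- move=> [s]; rewrite desc_childE => /orP [/eqP -> | /existsP [c /andP [tc sc]]] ws.
    by left.
  by right; apply/bigcupP; exists c => //; apply/bigcupP; exists s.
- case=> [wt | /bigcupP [c tc /bigcupP [s sc ws]]].
    by exists t => //; apply: connect0.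
  exists s => //; rewrite desc_childE; apply/orP; right.
  by apply/existsP; exists c; rewrite tc.
Qed.

Lemma introduce_parent t w u : is_introduce par beta t w u -> par u = Some t.
Proof. by move=> [ch _ _]; have := set11 u; rewrite -ch inE => /eqP. Qed.

Lemma gamma_introduce t w u :
  is_introduce par beta t w u -> gamma par beta t = w |: gamma par beta u.
Proof.
move=> [ch bt _]; rewrite gammaE ch big_set1 bt -setUA.
by congr (_ |: _); apply/setUidPr/bag_sub_gamma.
Qed.

Lemma nbhd_introduced_sub_bag r t s u :
  tree_decomposition e par r beta -> is_introduce par beta t s u ->
  nbhd e s :&: gamma par beta u \subset beta u.
Proof.
move=> [tree _ edge_bag conn] intro; have [_ bt su] := intro.
apply/subsetP => w /setIP [sw /bigcupP [y y_u wy]]; apply: contraT => wu.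
have [z /andP [sz wz]] : exists t, (s \in beta t) && (w \in beta t).
  by apply: edge_bag; rewrite inE in sw.
have z_u : desc par z u by apply: (tree_connected_desc (conn w) _ _ _ y_u); rewrite inE.
have t_u : desc par t u.
  by apply: (tree_connected_desc (conn s) _ _ _ z_u); rewrite inE // bt setU11.
by have /negP := parent_not_desc tree (introduce_parent intro).
Qed.

End Decomposition.

Section Bipartite.

Variables (V : finType) (e : rel V) (W U : {set V}).
Hypothesis bip : bipartition e W U.

Lemma bipartition_notin_W x : x \in U -> x \notin W.
Proof.
have [WU0 _ _] := bip; move=> xU; apply/negP => xW.
have : x \in W :&: U by rewrite inE xW xU.
by rewrite WU0 inE.
Qed.

Lemma bipartition_nbhd_sub x : x \in U -> nbhd e x \subset W.
Proof.
have [_ _ cross] := bip; move=> xU; apply/subsetP => y; rewrite inE.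
move/cross => /orP [/andP [xW _] | /andP [_ //]].
by rewrite (negbTE (bipartition_notin_W xU)) in xW.
Qed.

Variables (N : finType) (par : N -> option N) (beta : N -> {set V}).

Lemma derived_bag_sub_W t : derived_bag e W U par beta t \subset W.
Proof.
apply/subsetP => w /setUP [/setIP [_ //] | /bigcupP [x /setIP [_ xU] /setIP [xw _]]].
exact: subsetP (bipartition_nbhd_sub xU) w xw.
Qed.

Lemma derived_bag_introduce_special r t s u :
  tree_decomposition e par r beta -> s \in U -> is_introduce par beta t s u ->
  derived_bag e W U par beta t = derived_bag e W U par beta u.
Proof.
move=> td sU intro; have [_ bt su] := intro.
have sW := bipartition_notin_W sU.
have nbhd_gamma x : x \in U ->
    nbhd e x :&: gamma par beta t = nbhd e x :&: gamma par beta u.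
  move=> xU; have : s \notin nbhd e x.
    exact: contra (subsetP (bipartition_nbhd_sub xU) s) sW.
  rewrite inE => xs; apply/setP => w; rewrite (gamma_introduce intro) !inE.
  by case: eqVneq => // ->; rewrite (negbTE xs).
have bagW : beta t :&: W = beta u :&: W.
  by apply/setP => w; rewrite bt !inE; case: eqVneq => // ->; rewrite (negbTE sW) !andbF.
have bagU : beta t :&: U = s |: (beta u :&: U).
  by apply/setP => w; rewrite bt !inE; case: eqVneq => // ->; rewrite sU.
rewrite /derived_bag (eq_bigr (fun x => nbhd e x :&: gamma par beta u)); last first.
  by move=> x /setIP [_ /nbhd_gamma].
rewrite bagW bagU big_setU1 ?inE ?(negbTE su) //= setUA; congr (_ :|: _).
apply/setUidPl; rewrite subsetI (nbhd_introduced_sub_bag td intro).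
exact: subset_trans (subsetIl _ _) (bipartition_nbhd_sub sU).
Qed.

End Bipartite.

Theorem lemma12 (V N : finType) (e : rel V) (W U : {set V}) (g : rel V)
    (par : N -> option N) (r : N) (beta : N -> {set V})
    (s : V) (t t' : N) :
  simple_graph e -> bipartition e W U -> planar e ->
  half_square e W g ->
  nice_tree_decomposition e par r beta ->
  s \in U ->
  is_introduce par beta t s t' ->
  Original e W U par beta t = Original e W U par beta t' /\
  Fake e W U par beta t = Fake e W U par beta t'.
Proof.
move=> _ bip _ _ [td _ _] sU intro; have [_ bt _] := intro.
have sD : s \notin derived_bag e W U par beta t'.
  apply: contra (bipartition_notin_W bip sU).
  exact: subsetP (derived_bag_sub_W bip par beta t') s.
rewrite /Original /Fake (derived_bag_introduce_special bip td sU intro) bt.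
split; apply/setP => w; rewrite ?in_setI ?in_setD in_setU1;
  by case: eqVneq => // ->; rewrite (negbTE sD) !andbF.
Qed.
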